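(* Let $f:[-1,1]\to\mathbb{R}$ be convex and symmetric ($f(x)=f(-x)$). Define, for $d_1,d_2\in[-1,1]$, $$f^+(d_1,d_2)=\frac{1+d_1d_2}{2}\,f\!\left(\frac{d_1+d_2}{1+d_1d_2}\right)+\frac{1-d_1d_2}{2}\,f\!\left(\frac{d_1-d_2}{1-d_1d_2}\right).$$ Then $f^+$ is convex and symmetric in each of its variables, i.e. for each fixed $d_2$ the map $d_1\mapsto f^+(d_1,d_2)$ is convex on $[-1,1]$ with $f^+(d_1,d_2)=f^+(-d_1,d_2)$, and likewise in $d_2$ for fixed $d_1$.
   Context: In the definition of $f^+$, a term whose prefactor $1\pm d_1d_2$ equals $0$ is taken to be $0$. *)

From Stdlib Require Import Reals.
Open Scope R_scope.

Definition convex_on (a b : R) (f : R -> R) : Prop :=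
  forall x y t, a <= x <= b -> a <= y <= b -> 0 <= t <= 1 ->
    f (t * x + (1 - t) * y) <= t * f x + (1 - t) * f y.

Definition symmetric_on1 (f : R -> R) : Prop :=
  forall x, -1 <= x <= 1 -> f x = f (- x).

(* a term c/2 * f(u/c) whose prefactor c is 0 is taken to be 0 *)
Definition fterm (f : R -> R) (c u : R) : R :=
  if Req_EM_T c 0 then 0 else c / 2 * f (u / c).

Definition fplus (f : R -> R) (d1 d2 : R) : R :=
  fterm f (1 + d1 * d2) (d1 + d2) + fterm f (1 - d1 * d2) (d1 - d2).

(* [fterm f c u = c/2 * f(u/c)] is, up to the factor 1/2, the perspective of
   [f]: it is positively homogeneous and, on the cone [|u| <= c], subadditive,
   hence jointly convex in [(c, u)].  In [fplus f d1 d2] both arguments of each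
   [fterm] are affine in [d1], so [fplus] is convex in [d1].  Symmetry of [f]
   makes [fterm] even in [u], which gives evenness in [d1] (the two terms are
   exchanged) and the symmetry [fplus f d1 d2 = fplus f d2 d1]; the statements
   in [d2] follow from those in [d1]. *)
From Stdlib Require Import Reals Lra Psatz.
Open Scope R_scope.

Lemma div_in_unit_interval (u c : R) : 0 < c -> -c <= u <= c -> -1 <= u / c <= 1.
Proof.
  intros Hc Hu. assert (E : u = (u / c) * c) by (field; lra).
  set (v := u / c) in *. clearbody v. subst u. split; nra.
Qed.

Lemma convex_on_ext (a b : R) (f g : R -> R) :
  (forall x, a <= x <= b -> f x = g x) -> convex_on a b g -> convex_on a b f.
Proof.
  intros Efg Hg x y t Hx Hy Ht.
  rewrite !Efg by (auto; nra).
  now apply Hg.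
Qed.

Lemma fterm_c0 (f : R -> R) (u : R) : fterm f 0 u = 0.
Proof. unfold fterm. now destruct (Req_EM_T 0 0). Qed.

Lemma fterm_scale (f : R -> R) (s c u : R) :
  fterm f (s * c) (s * u) = s * fterm f c u.
Proof.
  unfold fterm.
  destruct (Req_EM_T (s * c) 0) as [E|E]; destruct (Req_EM_T c 0) as [Ec|Ec].
  - ring.
  - destruct (Rmult_integral _ _ E) as [Es|]; [subst s; ring | contradiction].
  - exfalso. apply E. rewrite Ec. ring.
  - assert (s <> 0) by (intros ->; apply E; ring).
    replace (s * u / (s * c)) with (u / c) by (field; auto).
    field.
Qed.

Lemma fterm_opp (f : R -> R) (c u : R) : symmetric_on1 f -> -c <= u <= c ->
  fterm f c (- u) = fterm f c u.
Proof.
  intros Hs Hu. unfold fterm. destruct (Req_EM_T c 0) as [E|E]; [reflexivity|].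
  assert (Hc : 0 < c) by lra.
  replace (- u / c) with (- (u / c)) by (field; lra).
  now rewrite <- (Hs (u / c) (div_in_unit_interval u c Hc Hu)).
Qed.

(* The weight [s = c1/(c1+c2)] writes [(u1+u2)/(c1+c2)] as a convex
   combination of [u1/c1] and [u2/c2]. *)
Lemma fterm_subadditive (f : R -> R) (c1 c2 u1 u2 : R) : convex_on (-1) 1 f ->
  -c1 <= u1 <= c1 -> -c2 <= u2 <= c2 ->
  fterm f (c1 + c2) (u1 + u2) <= fterm f c1 u1 + fterm f c2 u2.
Proof.
  intros Hf H1 H2.
  destruct (Req_dec c1 0) as [E1|E1].
  { assert (u1 = 0) by lra. subst c1 u1. rewrite !Rplus_0_l, fterm_c0. lra. }
  destruct (Req_dec c2 0) as [E2|E2].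
  { assert (u2 = 0) by lra. subst c2 u2. rewrite !Rplus_0_r, fterm_c0. lra. }
  assert (Hc1 : 0 < c1) by lra. assert (Hc2 : 0 < c2) by lra.
  unfold fterm.
  destruct (Req_EM_T (c1 + c2) 0); [lra|].
  destruct (Req_EM_T c1 0); [lra|].
  destruct (Req_EM_T c2 0); [lra|].
  set (s := c1 / (c1 + c2)).
  assert (Hs : 0 <= s <= 1).
  { assert (E : s = c1 / (c1 + c2)) by reflexivity. clearbody s.
    assert (c1 = s * (c1 + c2)) by (rewrite E; field; lra).
    split; nra. }
  assert (Ecomb : (u1 + u2) / (c1 + c2) = s * (u1 / c1) + (1 - s) * (u2 / c2))
    by (unfold s; field; lra).
  rewrite Ecomb.
  pose proof (Hf _ _ s (div_in_unit_interval _ _ Hc1 H1)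
                (div_in_unit_interval _ _ Hc2 H2) Hs) as Hconv.
  apply Rle_trans with ((c1 + c2) / 2 * (s * f (u1 / c1) + (1 - s) * f (u2 / c2))).
  - apply Rmult_le_compat_l; lra.
  - right. unfold s. field. lra.
Qed.

Lemma fterm_convex (f : R -> R) (c1 u1 c2 u2 t : R) : convex_on (-1) 1 f ->
  -c1 <= u1 <= c1 -> -c2 <= u2 <= c2 -> 0 <= t <= 1 ->
  fterm f (t * c1 + (1 - t) * c2) (t * u1 + (1 - t) * u2)
  <= t * fterm f c1 u1 + (1 - t) * fterm f c2 u2.
Proof.
  intros Hf H1 H2 Ht.
  rewrite <- !fterm_scale.
  apply fterm_subadditive; [exact Hf | nra | nra].
Qed.

Lemma fplus_sym (f : R -> R) (d1 d2 : R) : symmetric_on1 f ->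
  -1 <= d1 <= 1 -> -1 <= d2 <= 1 -> fplus f d1 d2 = fplus f d2 d1.
Proof.
  intros Hs H1 H2. unfold fplus.
  replace (1 + d1 * d2) with (1 + d2 * d1) by ring.
  replace (d1 + d2) with (d2 + d1) by ring.
  replace (1 - d1 * d2) with (1 - d2 * d1) by ring.
  replace (d1 - d2) with (- (d2 - d1)) by ring.
  rewrite fterm_opp; [reflexivity | exact Hs | split; nra].
Qed.

Lemma fplus_oppl (f : R -> R) (d1 d2 : R) : symmetric_on1 f ->
  -1 <= d1 <= 1 -> -1 <= d2 <= 1 -> fplus f d1 d2 = fplus f (- d1) d2.
Proof.
  intros Hs H1 H2. unfold fplus.
  replace (1 + - d1 * d2) with (1 - d1 * d2) by ring.
  replace (1 - - d1 * d2) with (1 + d1 * d2) by ring.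
  replace (- d1 + d2) with (- (d1 - d2)) by ring.
  replace (- d1 - d2) with (- (d1 + d2)) by ring.
  rewrite (fterm_opp f (1 - d1 * d2)), (fterm_opp f (1 + d1 * d2));
    [ring | exact Hs | split; nra | exact Hs | split; nra].
Qed.

Lemma convex_fplusl (f : R -> R) (d2 : R) : convex_on (-1) 1 f ->
  -1 <= d2 <= 1 -> convex_on (-1) 1 (fun d1 => fplus f d1 d2).
Proof.
  intros Hf H2 x y t Hx Hy Ht. unfold fplus.
  replace (1 + (t * x + (1 - t) * y) * d2)
    with (t * (1 + x * d2) + (1 - t) * (1 + y * d2)) by ring.
  replace (t * x + (1 - t) * y + d2)
    with (t * (x + d2) + (1 - t) * (y + d2)) by ring.
  replace (1 - (t * x + (1 - t) * y) * d2)
    with (t * (1 - x * d2) + (1 - t) * (1 - y * d2)) by ring.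
  replace (t * x + (1 - t) * y - d2)
    with (t * (x - d2) + (1 - t) * (y - d2)) by ring.
  pose proof (fterm_convex f (1 + x * d2) (x + d2) (1 + y * d2) (y + d2) t Hf
    ltac:(split; nra) ltac:(split; nra) Ht).
  pose proof (fterm_convex f (1 - x * d2) (x - d2) (1 - y * d2) (y - d2) t Hf
    ltac:(split; nra) ltac:(split; nra) Ht).
  lra.
Qed.

Theorem lemma1 (f : R -> R) :
  convex_on (-1) 1 f -> symmetric_on1 f ->
  (forall d2, -1 <= d2 <= 1 ->
     convex_on (-1) 1 (fun d1 => fplus f d1 d2) /\
     (forall d1, -1 <= d1 <= 1 -> fplus f d1 d2 = fplus f (- d1) d2)) /\
  (forall d1, -1 <= d1 <= 1 ->
     convex_on (-1) 1 (fun d2 => fplus f d1 d2) /\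
     (forall d2, -1 <= d2 <= 1 -> fplus f d1 d2 = fplus f d1 (- d2))).
Proof.
  intros Hf Hs. split.
  - intros d2 H2. split.
    + exact (convex_fplusl f d2 Hf H2).
    + intros d1 H1. exact (fplus_oppl f d1 d2 Hs H1 H2).
  - intros d1 H1. split.
    + apply (convex_on_ext _ _ _ (fun d2 => fplus f d2 d1)).
      * intros d2 H2. exact (fplus_sym f d1 d2 Hs H1 H2).
      * exact (convex_fplusl f d1 Hf H1).
    + intros d2 H2.
      rewrite (fplus_sym f d1 d2), (fplus_sym f d1 (- d2)) by (auto; lra).
      apply fplus_oppl; assumption.
Qed.
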